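(* Consider the two-species chemostat $$\dot s=-\mu_1(s)b_1-\mu_2(s)b_2+D(s_\mathrm{in}-s),\qquad \dot b_i=\mu_i(s)b_i-Db_i\quad(i=1,2),$$ with $s_\mathrm{in}>0$ and continuously differentiable growth functions $\mu_1,\mu_2:[0,s_\mathrm{in}]\to[0,\infty)$. Fix $\bar s\in(0,s_\mathrm{in})$ with $\mu_1(\bar s)<\mu_2(\bar s)$, and constants $0<D_{\min}<\mu_2(\bar s)<D_{\max}$. Use the dynamic feedback $$D=\operatorname{sat}_{[D_{\min},D_{\max}]}\big(\bar D-G_1(s-\bar s)\big),\qquad \frac{d}{dt}\bar D=-G_2(s-\bar s)(\bar D-D_{\min})(D_{\max}-\bar D).$$ Then for any constants $G_1>0$, $G_2>0$ with $G_1>-\mu_2'(\bar s)$, the equilibrium $(s,b_1,b_2,\bar D)=(\bar s,0,s_\mathrm{in}-\bar s,\mu_2(\bar s))$ of the closed-loop system is locally exponentially stable, and for solutions starting sufficiently close to it, $\lim_{t\to\infty}\bar D(t)=\mu_2(\bar s)$.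
   Context: The saturation function is $\operatorname{sat}_{[D_{\min},D_{\max}]}(x)=D_{\max}$ if $x>D_{\max}$, $=x$ if $x\in[D_{\min},D_{\max}]$, $=D_{\min}$ if $x<D_{\min}$. *)

From Stdlib Require Import Reals.
Open Scope R_scope.

Definition sat (Dmin Dmax x : R) : R :=
  if Rlt_dec Dmax x then Dmax else if Rlt_dec x Dmin then Dmin else x.

Definition rcont0 (f : R -> R) : Prop :=
  forall eps, 0 < eps -> exists d, 0 < d /\
    forall t, 0 <= t < d -> Rabs (f t - f 0) < eps.

Definition closed_loop_solution (mu1 mu2 : R -> R) (sin sbar Dmin Dmax G1 G2 : R)
    (s b1 b2 Db : R -> R) : Prop :=
  (forall t, 0 < t ->
     let D := sat Dmin Dmax (Db t - G1 * (s t - sbar)) in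
     derivable_pt_lim s t (- mu1 (s t) * b1 t - mu2 (s t) * b2 t + D * (sin - s t)) /\
     derivable_pt_lim b1 t (mu1 (s t) * b1 t - D * b1 t) /\
     derivable_pt_lim b2 t (mu2 (s t) * b2 t - D * b2 t) /\
     derivable_pt_lim Db t (- G2 * (s t - sbar) * (Db t - Dmin) * (Dmax - Db t)))
  /\ rcont0 s /\ rcont0 b1 /\ rcont0 b2 /\ rcont0 Db.

Definition dist4 (s b1 b2 Db s0 b10 b20 Db0 : R) : R :=
  Rmax (Rmax (Rabs (s - s0)) (Rabs (b1 - b10)))
       (Rmax (Rabs (b2 - b20)) (Rabs (Db - Db0))).

(* In the error coordinates e = s - sbar, z = Dbar - Ds (Ds = mu2 sbar), X = s + b1 + b2 - sin
   and Y = b1, near the equilibrium (where the saturation is inactive) the system reads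
     e' = Bs (z - kappa e) + O(|e| (|e| + |z|)) + Q(X,Y),  z' = -alpha e + O(|e| |z|),
     X' = -D X,  Y' = (mu1 s - D) Y,
   with Bs = sin - sbar, kappa = G1 + mu2'(sbar) > 0, alpha = G2 (Ds - Dmin)(Dmax - Ds) > 0.
   Hence V = alpha e^2 + Bs z^2 - 2 g e z + M (X^2 + Y^2) satisfies V' <= -lam V near the
   equilibrium, for a small cross weight g and a weight M absorbing the input Q. *)

From Stdlib Require Import Reals Lra Psatz Classical.
Open Scope R_scope.

Lemma rcont0_ext (f h : R -> R) :
  (forall t, 0 <= t -> f t = h t) -> rcont0 f -> rcont0 h.
Proof.
  intros E Hf eps He. destruct (Hf eps He) as [d [Hd Hfd]].
  exists d; split; [exact Hd|]. intros t Ht. rewrite <- !E by lra. exact (Hfd t Ht).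
Qed.

Lemma rcont0_const (c : R) : rcont0 (fun _ => c).
Proof.
  intros eps He. exists 1; split; [lra|]. intros t _.
  rewrite Rminus_diag, Rabs_R0. exact He.
Qed.

Lemma rcont0_plus (f g : R -> R) : rcont0 f -> rcont0 g -> rcont0 (fun t => f t + g t).
Proof.
  intros Hf Hg eps He.
  destruct (Hf (eps / 2) ltac:(lra)) as [d1 [Hd1 Hf1]].
  destruct (Hg (eps / 2) ltac:(lra)) as [d2 [Hd2 Hg2]].
  exists (Rmin d1 d2); split; [now apply Rmin_glb_lt|]. intros t [Ht0 Ht].
  pose proof (Rmin_l d1 d2). pose proof (Rmin_r d1 d2).
  specialize (Hf1 t ltac:(lra)). specialize (Hg2 t ltac:(lra)).
  replace (f t + g t - (f 0 + g 0)) with ((f t - f 0) + (g t - g 0)) by ring.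
  pose proof (Rabs_triang (f t - f 0) (g t - g 0)). lra.
Qed.

Lemma rcont0_mult (f g : R -> R) : rcont0 f -> rcont0 g -> rcont0 (fun t => f t * g t).
Proof.
  intros Hf Hg eps He.
  set (C := Rabs (f 0) + Rabs (g 0) + 1).
  pose proof (Rabs_pos (f 0)) as Hf0. pose proof (Rabs_pos (g 0)) as Hg0.
  assert (HC : 0 < C) by (unfold C; lra).
  set (e1 := Rmin 1 (eps / (2 * C))).
  assert (He1 : 0 < e1) by (apply Rmin_glb_lt; [lra | apply Rdiv_lt_0_compat; lra]).
  assert (He1C : e1 * C <= eps / 2).
  { apply Rle_trans with (eps / (2 * C) * C).
    - apply Rmult_le_compat_r; [lra | apply Rmin_r].
    - right; field; lra. }
  pose proof (Rmin_l 1 (eps / (2 * C))) as He11.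
  destruct (Hf e1 He1) as [d1 [Hd1 Hf1]].
  destruct (Hg e1 He1) as [d2 [Hd2 Hg2]].
  exists (Rmin d1 d2); split; [now apply Rmin_glb_lt|]. intros t [Ht0 Ht].
  pose proof (Rmin_l d1 d2). pose proof (Rmin_r d1 d2).
  specialize (Hf1 t ltac:(lra)). specialize (Hg2 t ltac:(lra)).
  assert (Hgt : Rabs (g t) <= Rabs (g 0) + 1).
  { replace (g t) with ((g t - g 0) + g 0) by ring.
    pose proof (Rabs_triang (g t - g 0) (g 0)). fold e1 in He11. lra. }
  replace (f t * g t - f 0 * g 0) with ((f t - f 0) * g t + f 0 * (g t - g 0)) by ring.
  eapply Rle_lt_trans; [apply Rabs_triang|]. rewrite !Rabs_mult.
  pose proof (Rabs_pos (f t - f 0)). pose proof (Rabs_pos (g t)).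
  pose proof (Rabs_pos (g t - g 0)).
  assert (Rabs (f t - f 0) * Rabs (g t) <= e1 * (Rabs (g 0) + 1))
    by (apply Rmult_le_compat; lra).
  assert (Rabs (f 0) * Rabs (g t - g 0) <= Rabs (f 0) * e1)
    by (apply Rmult_le_compat_l; lra).
  unfold C in He1C. nra.
Qed.

Lemma rcont0_minus (f g : R -> R) : rcont0 f -> rcont0 g -> rcont0 (fun t => f t - g t).
Proof.
  intros Hf Hg. apply (rcont0_ext (fun t => f t + (-1) * g t)); [intros; ring|].
  apply rcont0_plus; [exact Hf|]. apply rcont0_mult; [apply rcont0_const | exact Hg].
Qed.

Lemma rcont0_sq (f : R -> R) : rcont0 f -> rcont0 (fun t => f t ^ 2).
Proof.
  intros Hf. apply (rcont0_ext (fun t => f t * f t)); [intros; ring|]. now apply rcont0_mult.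
Qed.

Lemma continuity_rcont0 (f : R -> R) : continuity_pt f 0 -> rcont0 f.
Proof.
  intros Hf eps He. destruct (Hf eps He) as [d [Hd Hfd]].
  exists d; split; [exact Hd|]. intros t [Ht0 Ht].
  destruct (Req_dec t 0) as [->|Hne].
  - rewrite Rminus_diag, Rabs_R0. exact He.
  - apply (Hfd t). split; [split; [exact I | congruence]|].
    simpl; unfold R_dist. rewrite Rminus_0_r, Rabs_right; lra.
Qed.

Lemma nonpos_derivative_le (f df : R -> R) (a b : R) : a < b ->
  (forall c, a < c < b -> derivable_pt_lim f c (df c)) ->
  (forall c, a <= c <= b -> continuity_pt f c) ->
  (forall c, a < c < b -> df c <= 0) -> f b <= f a.
Proof.
  intros Hab Hd Hc Hn.
  assert (prf : forall c, a < c < b -> derivable_pt f c) by (intros c Hc'; exists (df c); now apply Hd).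
  assert (prid : forall c, a < c < b -> derivable_pt id c) by (intros; apply derivable_pt_id).
  destruct (MVT f id a b prf prid Hab Hc) as [c [Hac E]].
  { intros; apply derivable_continuous_pt, derivable_pt_id. }
  rewrite (derive_pt_eq_0 f c (df c) (prf c Hac) (Hd c Hac)) in E.
  rewrite (derive_pt_eq_0 id c 1 (prid c Hac) (derivable_pt_lim_id c)) in E.
  unfold id in E. pose proof (Hn c Hac). nra.
Qed.

Lemma derivable_pt_lim_exp_scal (lam t : R) :
  derivable_pt_lim (fun u => exp (lam * u)) t (exp (lam * t) * lam).
Proof.
  apply (derivable_pt_lim_comp (fun u => lam * u) exp t lam (exp (lam * t))).
  - pose proof (derivable_pt_lim_scal id lam t 1 (derivable_pt_lim_id t)) as H.
    rewrite Rmult_1_r in H. exact H.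
  - apply derivable_pt_lim_exp.
Qed.

(* Comparison lemma: U' <= -lam U on ]0,T[ yields U T <= U 0 e^(-lam T); only
   right-continuity of U is available at the initial time. *)
Lemma differential_decay (U U' : R -> R) (lam T : R) : 0 < T ->
  (forall t, 0 < t -> derivable_pt_lim U t (U' t)) -> rcont0 U ->
  (forall t, 0 < t < T -> U' t <= - lam * U t) ->
  U T <= U 0 * exp (- lam * T).
Proof.
  intros HT Hder H0 Hd.
  (* g = U e^(lam t) is nonincreasing on ]0,T] and right-continuous at 0. *)
  set (g := fun t => U t * exp (lam * t)).
  set (dg := fun t => U' t * exp (lam * t) + U t * (exp (lam * t) * lam)).
  assert (Hgd : forall t, 0 < t -> derivable_pt_lim g t (dg t))
    by (intros t Ht; apply (derivable_pt_lim_mult U (fun u => exp (lam * u)));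
        [apply Hder; exact Ht | apply derivable_pt_lim_exp_scal]).
  assert (Hmono : forall a, 0 < a < T -> g T <= g a).
  { intros a Ha. apply (nonpos_derivative_le g dg a T); [lra | | |].
    - intros c Hc. apply Hgd. lra.
    - intros c Hc. apply derivable_continuous_pt. exists (dg c). apply Hgd. lra.
    - intros c Hc. unfold dg. pose proof (Hd c ltac:(lra)). pose proof (exp_pos (lam * c)). nra. }
  assert (Hg0 : rcont0 g).
  { apply rcont0_mult; [exact H0|]. apply continuity_rcont0.
    apply derivable_continuous_pt. eexists. apply derivable_pt_lim_exp_scal. }
  assert (HgT : g T <= g 0).
  { apply Rnot_lt_le. intro Hlt.
    destruct (Hg0 (g T - g 0) ltac:(lra)) as [d [Hd0 Hd1]].
    set (a := Rmin (d / 2) (T / 2)).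
    pose proof (Rmin_l (d / 2) (T / 2)). pose proof (Rmin_r (d / 2) (T / 2)).
    assert (Ha0 : 0 < a) by (apply Rmin_glb_lt; lra).
    pose proof (Hd1 a ltac:(unfold a in *; lra)) as Hclose. pose proof (Hmono a ltac:(unfold a in *; lra)).
    apply Rabs_def2 in Hclose. lra. }
  unfold g in HgT. rewrite Rmult_0_r, exp_0, Rmult_1_r in HgT.
  replace (U T) with (U T * exp (lam * T) * exp (- lam * T)).
  - apply Rmult_le_compat_r; [left; apply exp_pos | exact HgT].
  - rewrite Rmult_assoc, <- exp_plus. replace (lam * T + - lam * T) with 0 by ring.
    rewrite exp_0; ring.
Qed.

(* The infimum of a nonempty set of nonnegative reals, characterised as its
   greatest lower bound (obtained as minus the supremum of the negated set). *)
Lemma nonneg_infimum (P : R -> Prop) (t1 : R) : 0 <= t1 -> P t1 ->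
  exists ts, (forall t, 0 <= t -> P t -> ts <= t) /\
    (forall L, (forall t, 0 <= t -> P t -> L <= t) -> L <= ts).
Proof.
  intros Ht1 HP.
  set (E := fun r => exists t, r = - t /\ 0 <= t /\ P t).
  assert (HE : bound E) by (exists 0; intros r [t [-> [Ht _]]]; lra).
  destruct (completeness E HE (ex_intro _ (- t1) (ex_intro _ t1 (conj eq_refl (conj Ht1 HP)))))
    as [m [Hub Hlub]].
  exists (- m). split.
  - intros t Ht HPt. assert (- t <= m) by (apply Hub; exists t; auto). lra.
  - intros L HL. assert (m <= - L); [|lra].
    apply Hlub. intros r [t [-> [Ht HPt]]]. pose proof (HL t Ht HPt). lra.
Qed.

(* The first hitting time ts of {U >= th}
   would satisfy U ts >= th by continuity, yet U ts <= U 0 < th by decay on ]0,ts[. *)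
Lemma trapped_below (U U' : R -> R) (lam th : R) :
  0 <= lam -> 0 <= U 0 -> U 0 < th ->
  (forall t, 0 < t -> derivable_pt_lim U t (U' t)) -> rcont0 U ->
  (forall t, 0 < t -> U t < th -> U' t <= - lam * U t) ->
  forall t, 0 <= t -> U t < th.
Proof.
  intros Hlam HU0 HU0th Hder H0 Hb.
  apply NNPP. intros Hno. apply not_all_ex_not in Hno as [t1 Ht1].
  apply imply_to_and in Ht1 as [Ht1 Hhit]. apply Rnot_lt_le in Hhit.
  destruct (nonneg_infimum (fun t => th <= U t) t1 Ht1 Hhit) as [ts [Hlow Hgreat]].
  (* ts > 0 by right-continuity at 0, and U < th on [0, ts[. *)
  destruct (H0 (th - U 0) ltac:(lra)) as [d [Hd Hd']].
  assert (Hts : d <= ts).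
  { apply Hgreat. intros t Ht Ht'. apply Rnot_lt_le. intro Hlt.
    pose proof (Hd' t ltac:(lra)) as Hclose. apply Rabs_def2 in Hclose. lra. }
  assert (Hbefore : forall t, 0 <= t < ts -> U t < th).
  { intros t Ht. apply Rnot_le_lt. intro. pose proof (Hlow t ltac:(lra) H). lra. }
  (* U ts >= th: otherwise U stays below th on a neighbourhood of ts. *)
  assert (Hat : th <= U ts).
  { apply Rnot_lt_le. intro Hlt.
    assert (Hc : continuity_pt U ts)
      by (apply derivable_continuous_pt; exists (U' ts); apply Hder; lra).
    destruct (Hc (th - U ts) ltac:(lra)) as [de [Hde Hde']].
    assert (ts + de / 2 <= ts); [|lra].
    apply Hgreat. intros t Ht Ht'. apply Rnot_lt_le. intro Hlt2.
    destruct (Rlt_or_le t ts) as [Hl|Hl]; [pose proof (Hbefore t ltac:(lra)); lra|].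
    destruct (Req_dec t ts) as [->|Hne]; [lra|].
    assert (Hclose : Rabs (U t - U ts) < th - U ts).
    { apply Hde'. split; [split; [exact I | congruence]|].
      simpl; unfold R_dist. rewrite Rabs_right; lra. }
    apply Rabs_def2 in Hclose. lra. }
  pose proof (differential_decay U U' lam ts ltac:(lra) Hder H0
                (fun t Ht => Hb t (proj1 Ht) (Hbefore t ltac:(lra)))).
  assert (exp (- lam * ts) <= 1).
  { rewrite <- exp_0. destruct (Req_dec (lam * ts) 0) as [Z|Z].
    - replace (- lam * ts) with 0 by lra. lra.
    - left. apply exp_increasing. nra. }
  nra.
Qed.
Lemma trapped_exponential_decay (U U' : R -> R) (lam th : R) :
  0 <= lam -> 0 <= U 0 -> U 0 < th ->
  (forall t, 0 < t -> derivable_pt_lim U t (U' t)) -> rcont0 U ->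
  (forall t, 0 < t -> U t < th -> U' t <= - lam * U t) ->
  forall t, 0 <= t -> U t <= U 0 * exp (- lam * t).
Proof.
  intros Hlam HU0 HU0th Hder H0 Hb t Ht.
  destruct (Rle_lt_or_eq_dec _ _ Ht) as [Hpos|<-].
  - apply (differential_decay U U'); auto.
    intros u Hu. apply Hb; [lra|]. apply (trapped_below U U' lam th); auto; lra.
  - rewrite Rmult_0_r, exp_0. lra.
Qed.

Lemma sq_abs (r : R) : r ^ 2 = Rabs r ^ 2.
Proof. rewrite RPow_abs, Rabs_right; [reflexivity | apply Rle_ge, pow2_ge_0]. Qed.

Lemma mult_le_abs_bounds (x y X Y : R) : Rabs x <= X -> Rabs y <= Y -> x * y <= X * Y.
Proof.
  intros Hx Hy. pose proof (Rabs_pos x). pose proof (Rabs_pos y).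
  apply Rle_trans with (Rabs (x * y)); [apply Rle_abs|]. rewrite Rabs_mult.
  apply Rmult_le_compat; auto.
Qed.

Lemma abs_le_between (x r : R) : Rabs x <= r -> - r <= x <= r.
Proof. intros H. pose proof (Rle_abs x). pose proof (Rle_abs (- x)). rewrite Rabs_Ropp in *. lra. Qed.

Lemma abs_le_of_sq (w K : R) : 0 <= K -> w ^ 2 <= K ^ 2 -> Rabs w <= K.
Proof.
  intros HK H. rewrite sq_abs in H. pose proof (Rabs_pos w).
  apply Rnot_lt_le. intro Hlt. nra.
Qed.

Lemma young_ineq (A c u w : R) : 0 < c -> 2 * A * u * w <= c / 8 * u ^ 2 + 8 * A ^ 2 / c * w ^ 2.
Proof.
  intros Hc.
  assert (0 <= (u - 8 * A / c * w) ^ 2 * (c / 8)) by (apply Rmult_le_pos; [apply pow2_ge_0 | lra]).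
  replace ((u - 8 * A / c * w) ^ 2 * (c / 8))
    with (c / 8 * u ^ 2 + 8 * A ^ 2 / c * w ^ 2 - 2 * A * u * w) in H by (field; lra).
  lra.
Qed.

(* Linear part of the (e,z) subsystem e' = B (z - a e), z' = -al e: the quadratic
   form al e^2 + B z^2 - 2 g e z decays at rate c0 once the cross weight g is small. *)
Lemma ez_linear_dissipation (al B a g c0 e z : R) :
  0 < al -> 0 < B -> 0 < a -> 0 < g ->
  g * (2 * al + B * a ^ 2) <= al * B * a -> c0 <= al * B * a -> c0 <= g * B ->
  2 * (al * e - g * z) * (B * (z - a * e)) + 2 * (B * z - g * e) * (- al * e)
    <= - c0 * (e ^ 2 + z ^ 2).
Proof.
  intros Hal HB Ha Hg Hcross Hc1 Hc2.
  pose proof (pow2_ge_0 e). pose proof (pow2_ge_0 z).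
  (* the only cross term 2 g B a e z is absorbed by g B (z - a e)^2 >= 0 *)
  assert (0 <= g * B * (z - a * e) ^ 2) by (apply Rmult_le_pos; [nra | apply pow2_ge_0]).
  assert ((- 2 * al * B * a + 2 * al * g + g * B * a ^ 2) * e ^ 2 <= - al * B * a * e ^ 2)
    by (apply Rmult_le_compat_r; nra).
  nra.
Qed.

Lemma ez_perturbed_dissipation (al B a g c0 k1 k2 e z Re Rz Q : R) :
  0 < al -> 0 < B -> 0 < a -> 0 < g -> 0 < c0 -> 0 <= k1 -> 0 <= k2 ->
  g * (2 * al + B * a ^ 2) <= al * B * a -> c0 <= al * B * a -> c0 <= g * B ->
  Rabs Re <= k1 * Rabs e -> Rabs Rz <= k2 * Rabs e ->
  4 * (al + g) * k1 + 4 * (B + g) * k2 <= c0 / 4 ->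
  2 * (al * e - g * z) * (B * (z - a * e) + Re + Q) + 2 * (B * z - g * e) * (- al * e + Rz)
    <= - (c0 / 2) * (e ^ 2 + z ^ 2) + 8 * (al + g) ^ 2 / c0 * Q ^ 2.
Proof.
  intros Hal HB Ha Hg Hc0 Hk1 Hk2 Hcross Hc1 Hc2 HRe HRz Hsmall.
  pose proof (ez_linear_dissipation al B a g c0 e z Hal HB Ha Hg Hcross Hc1 Hc2) as Hlin.
  set (u := Rabs e + Rabs z).
  pose proof (Rabs_pos e). pose proof (Rabs_pos z). pose proof (Rabs_pos Q).
  assert (Hw1 : Rabs (al * e - g * z) <= (al + g) * u).
  { unfold Rminus. eapply Rle_trans; [apply Rabs_triang|].
    rewrite Rabs_Ropp, !Rabs_mult, (Rabs_right al), (Rabs_right g) by lra. unfold u. nra. }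
  assert (Hw2 : Rabs (B * z - g * e) <= (B + g) * u).
  { unfold Rminus. eapply Rle_trans; [apply Rabs_triang|].
    rewrite Rabs_Ropp, !Rabs_mult, (Rabs_right B), (Rabs_right g) by lra. unfold u. nra. }
  assert (Hu2 : u ^ 2 <= 2 * (e ^ 2 + z ^ 2)).
  { unfold u. rewrite (sq_abs e), (sq_abs z). pose proof (pow2_ge_0 (Rabs e - Rabs z)). nra. }
  assert (HP1 : 2 * (al * e - g * z) * (Re + Q) <= 2 * (al + g) * k1 * u ^ 2 + 2 * (al + g) * u * Rabs Q).
  { assert (HRQ : Rabs (Re + Q) <= k1 * u + Rabs Q)
      by (eapply Rle_trans; [apply Rabs_triang|]; unfold u; nra).
    pose proof (mult_le_abs_bounds _ _ _ _ Hw1 HRQ). nra. }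
  assert (HP2 : 2 * (B * z - g * e) * Rz <= 2 * (B + g) * (k2 * u) * u).
  { assert (HRzu : Rabs Rz <= k2 * u) by (unfold u; nra).
    pose proof (mult_le_abs_bounds _ _ _ _ Hw2 HRzu). nra. }
  pose proof (young_ineq (al + g) c0 u (Rabs Q) Hc0) as HY. rewrite <- sq_abs in HY.
  assert (0 <= u ^ 2) by apply pow2_ge_0.
  assert (2 * (al + g) * k1 * u ^ 2 + 2 * (B + g) * (k2 * u) * u <= c0 / 4 * (e ^ 2 + z ^ 2)) by nra.
  nra.
Qed.

(* Remainder of the e-equation: nonlinear terms and linearisation error h = O(|e|). *)
Lemma e_remainder_bound (e z h kap Bs rho eta : R) :
  0 < kap -> 0 < Bs -> 0 <= eta ->
  Rabs e <= rho -> Rabs z <= rho -> Rabs h <= eta * Rabs e ->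
  Rabs (- e * (z - kap * e - h) - Bs * h) <= (rho * (1 + kap + eta) + Bs * eta) * Rabs e.
Proof.
  intros Hkap HBs Heta He Hz Hh.
  pose proof (Rabs_pos e). pose proof (Rabs_pos z). pose proof (Rabs_pos h).
  assert (Hzz : Rabs (z - kap * e - h) <= rho * (1 + kap + eta)).
  { unfold Rminus. eapply Rle_trans; [apply Rabs_triang|].
    eapply Rle_trans; [apply Rplus_le_compat_r, Rabs_triang|].
    rewrite !Rabs_Ropp, Rabs_mult, (Rabs_right kap) by lra. nra. }
  eapply Rle_trans; [apply Rabs_triang|].
  rewrite Rabs_Ropp, !Rabs_mult, Rabs_Ropp, (Rabs_right Bs) by lra.
  pose proof (Rabs_pos (z - kap * e - h)). nra.
Qed.

(* Remainder of the Dbar-equation around its linearisation -G2 lo hi e. *)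
Lemma z_remainder_bound (G2 e z lo hi rho : R) :
  0 < G2 -> Rabs z <= rho ->
  Rabs (- G2 * e * (z + lo) * (hi - z) + G2 * (lo * hi) * e)
    <= G2 * (Rabs (hi - lo) + rho) * rho * Rabs e.
Proof.
  intros HG2 Hz.
  replace (- G2 * e * (z + lo) * (hi - z) + G2 * (lo * hi) * e)
    with (- G2 * e * (z * (hi - lo) - z * z)) by ring.
  rewrite !Rabs_mult, Rabs_Ropp, (Rabs_right G2) by lra.
  pose proof (Rabs_pos e). pose proof (Rabs_pos z). pose proof (Rabs_pos (hi - lo)).
  assert (Rabs (z * (hi - lo) - z * z) <= (Rabs (hi - lo) + rho) * rho).
  { unfold Rminus at 1. eapply Rle_trans; [apply Rabs_triang|].
    rewrite Rabs_Ropp, !Rabs_mult.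
    assert (Rabs z * Rabs (hi - lo) <= rho * Rabs (hi - lo)) by (apply Rmult_le_compat_r; lra).
    assert (Rabs z * Rabs z <= rho * rho) by (apply Rmult_le_compat; lra).
    lra. }
  assert (Rabs e * Rabs (z * (hi - lo) - z * z) <= Rabs e * ((Rabs (hi - lo) + rho) * rho))
    by (apply Rmult_le_compat_l; lra).
  nra.
Qed.

(* The biomass terms enter the e-equation as an input of size O(|X| + |Y|). *)
Lemma input_bound (m1 m2 X Y Mb : R) :
  Rabs m1 <= Mb -> Rabs m2 <= Mb ->
  (- m1 * Y - m2 * (X - Y)) ^ 2 <= 5 * Mb ^ 2 * (X ^ 2 + Y ^ 2).
Proof.
  intros Hm1 Hm2.
  pose proof (Rabs_pos m1). pose proof (Rabs_pos m2).
  pose proof (Rabs_pos X). pose proof (Rabs_pos Y).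
  assert (HQ : Rabs (- m1 * Y - m2 * (X - Y)) <= Mb * (Rabs X + 2 * Rabs Y)).
  { unfold Rminus. eapply Rle_trans; [apply Rabs_triang|].
    rewrite Rabs_Ropp, !Rabs_mult, Rabs_Ropp.
    pose proof (Rabs_triang X (- Y)) as HXY. rewrite Rabs_Ropp in HXY.
    pose proof (Rabs_pos (X + - Y)). nra. }
  rewrite (sq_abs (_ - _)), (sq_abs X), (sq_abs Y).
  pose proof (Rabs_pos (- m1 * Y - m2 * (X - Y))).
  assert (Rabs (- m1 * Y - m2 * (X - Y)) ^ 2 <= (Mb * (Rabs X + 2 * Rabs Y)) ^ 2)
    by (apply pow_incr; lra).
  pose proof (pow2_ge_0 (2 * Rabs X - Rabs Y)). pose proof (pow2_ge_0 Mb). nra.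
Qed.

(* Washout of the total mass X and of the competitor Y: X' = -D X, Y' = (m1 - D) Y. *)
Lemma xy_dissipation (M c D m1 X Y : R) :
  0 <= M -> c <= D -> c <= D - m1 ->
  2 * M * (X * (- D * X) + Y * ((m1 - D) * Y)) <= - 2 * M * c * (X ^ 2 + Y ^ 2).
Proof.
  intros HM H1 H2. pose proof (pow2_ge_0 X). pose proof (pow2_ge_0 Y).
  assert (c * X ^ 2 + c * Y ^ 2 <= D * X ^ 2 + (D - m1) * Y ^ 2)
    by (apply Rplus_le_compat; apply Rmult_le_compat_r; lra).
  nra.
Qed.

Definition lyap (al B g M e z X Y : R) : R :=
  al * e ^ 2 + B * z ^ 2 - 2 * g * e * z + M * (X ^ 2 + Y ^ 2).

(* The cross term is dominated by the diagonal when g <= al/2, B/2. *)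
Lemma lyap_bounds (al B g M e z X Y : R) :
  0 < al -> 0 < B -> 0 < g -> g <= al / 2 -> g <= B / 2 ->
  Rmin al B / 2 * (e ^ 2 + z ^ 2) + M * (X ^ 2 + Y ^ 2) <= lyap al B g M e z X Y /\
  lyap al B g M e z X Y <= (al + B + g) * (e ^ 2 + z ^ 2) + M * (X ^ 2 + Y ^ 2).
Proof.
  intros Hal HB Hg Hg1 Hg2. unfold lyap.
  pose proof (Rmin_l al B). pose proof (Rmin_r al B).
  assert (g <= Rmin al B / 2) by (unfold Rmin; destruct (Rle_dec al B); lra).
  pose proof (pow2_ge_0 (e - z)). pose proof (pow2_ge_0 (e + z)).
  pose proof (pow2_ge_0 e). pose proof (pow2_ge_0 z).
  split; nra.
Qed.

Lemma sat_inactive (Dmin Dmax x : R) : Dmin <= x <= Dmax -> sat Dmin Dmax x = x.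
Proof.
  intros [H1 H2]. unfold sat.
  destruct (Rlt_dec Dmax x); [lra|]. destruct (Rlt_dec x Dmin); [lra | reflexivity].
Qed.

Lemma cross_weight_exists (al B a : R) : 0 < al -> 0 < B -> 0 < a ->
  exists g c0, 0 < g /\ g * (2 * al + B * a ^ 2) <= al * B * a /\ g <= al / 2 /\ g <= B / 2 /\
    0 < c0 /\ c0 <= al * B * a /\ c0 <= g * B.
Proof.
  intros Hal HB Ha.
  assert (Hden : 0 < 2 * al + B * a ^ 2) by (pose proof (pow2_ge_0 a); nra).
  set (g := Rmin (al * B * a / (2 * al + B * a ^ 2)) (Rmin (al / 2) (B / 2))).
  assert (Hg : 0 < g).
  { repeat apply Rmin_glb_lt; try lra. apply Rdiv_lt_0_compat; [|lra].
    repeat apply Rmult_lt_0_compat; lra. }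
  exists g, (Rmin (al * B * a) (g * B)).
  repeat split; try lra.
  - apply Rle_trans with (al * B * a / (2 * al + B * a ^ 2) * (2 * al + B * a ^ 2)).
    + apply Rmult_le_compat_r; [lra | apply Rmin_l].
    + right; field; lra.
  - eapply Rle_trans; [apply Rmin_r | apply Rmin_l].
  - eapply Rle_trans; [apply Rmin_r | apply Rmin_r].
  - apply Rmin_glb_lt; repeat apply Rmult_lt_0_compat; lra.
  - apply Rmin_l.
  - apply Rmin_r.
Qed.

Lemma local_linearization (f1 f2 : R -> R) (x0 d eta eps r0 : R) :
  continuity_pt f1 x0 -> derivable_pt_lim f2 x0 d -> 0 < eta -> 0 < eps -> 0 < r0 ->
  exists rho, 0 < rho /\ rho <= r0 /\ forall x, Rabs (x - x0) <= rho ->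
    Rabs (f1 x - f1 x0) <= eps /\ Rabs (f2 x - f2 x0 - d * (x - x0)) <= eta * Rabs (x - x0).
Proof.
  intros Hf1 Hf2 Heta Heps Hr0.
  destruct (Hf1 eps Heps) as [d1 [Hd1 Hclose]].
  destruct (Hf2 eta Heta) as [[d2 Hd2] Htan]. simpl in Htan.
  exists (Rmin r0 (Rmin (d1 / 2) (d2 / 2))).
  pose proof (Rmin_l r0 (Rmin (d1 / 2) (d2 / 2))) as Hr.
  pose proof (Rmin_r r0 (Rmin (d1 / 2) (d2 / 2))) as Hr'.
  pose proof (Rmin_l (d1 / 2) (d2 / 2)). pose proof (Rmin_r (d1 / 2) (d2 / 2)).
  split; [repeat apply Rmin_glb_lt; lra|]. split; [exact Hr|]. intros x Hx.
  destruct (Req_dec x x0) as [->|Hne].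
  { rewrite !Rminus_diag, Rmult_0_r, Rminus_diag, Rabs_R0. lra. }
  split.
  - left. apply Hclose. split; [split; [exact I | congruence]|]. simpl; unfold R_dist; lra.
  - assert (Hh : x - x0 <> 0) by lra.
    pose proof (Htan (x - x0) Hh ltac:(lra)) as Hq.
    replace (x0 + (x - x0)) with x in Hq by ring.
    replace (f2 x - f2 x0 - d * (x - x0)) with ((x - x0) * ((f2 x - f2 x0) / (x - x0) - d))
      by (field; exact Hh).
    rewrite Rabs_mult, Rmult_comm. apply Rmult_le_compat_r; [apply Rabs_pos | lra].
Qed.

(* Squared Euclidean norm of the error coordinates of a state (s,b1,b2,Db) around
   (sbar, 0, sin - sbar, Ds): e = s - sbar, z = Db - Ds, the total-mass error
   X = s + b1 + b2 - sin, and Y = b1. *)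
Definition error_sq (sbar sin Ds s b1 b2 Db : R) : R :=
  (s - sbar) ^ 2 + (Db - Ds) ^ 2 + (s + b1 + b2 - sin) ^ 2 + b1 ^ 2.

Section ErrorCoordinates.
Variables (sbar sin Ds s b1 b2 Db : R).
Local Notation N := (error_sq sbar sin Ds s b1 b2 Db).
Local Notation dist := (dist4 s b1 b2 Db sbar 0 (sin - sbar) Ds).

Lemma dist4_components :
  Rabs (s - sbar) <= dist /\ Rabs b1 <= dist /\ Rabs (b2 - (sin - sbar)) <= dist /\
  Rabs (Db - Ds) <= dist.
Proof.
  unfold dist4. rewrite Rminus_0_r.
  pose proof (Rmax_l (Rmax (Rabs (s - sbar)) (Rabs b1)) (Rmax (Rabs (b2 - (sin - sbar))) (Rabs (Db - Ds)))).
  pose proof (Rmax_r (Rmax (Rabs (s - sbar)) (Rabs b1)) (Rmax (Rabs (b2 - (sin - sbar))) (Rabs (Db - Ds)))).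
  pose proof (Rmax_l (Rabs (s - sbar)) (Rabs b1)). pose proof (Rmax_r (Rabs (s - sbar)) (Rabs b1)).
  pose proof (Rmax_l (Rabs (b2 - (sin - sbar))) (Rabs (Db - Ds))).
  pose proof (Rmax_r (Rabs (b2 - (sin - sbar))) (Rabs (Db - Ds))).
  repeat split; lra.
Qed.

Lemma dist4_le_of_error (K : R) : 0 <= K -> 3 * N <= K ^ 2 -> dist <= K.
Proof.
  intros HK HN. unfold error_sq in HN.
  pose proof (pow2_ge_0 (s - sbar)). pose proof (pow2_ge_0 (Db - Ds)).
  pose proof (pow2_ge_0 (s + b1 + b2 - sin)). pose proof (pow2_ge_0 b1).
  assert ((b2 - (sin - sbar)) ^ 2 <= 3 * N).
  { unfold error_sq. replace (b2 - (sin - sbar)) with ((s + b1 + b2 - sin) - (s - sbar) - b1) by ring.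
    pose proof (pow2_ge_0 (s + b1 + b2 - sin + (s - sbar))).
    pose proof (pow2_ge_0 (s + b1 + b2 - sin + b1)). pose proof (pow2_ge_0 (s - sbar - b1)). nra. }
  unfold dist4, error_sq in *. rewrite Rminus_0_r.
  repeat apply Rmax_lub; apply abs_le_of_sq; lra.
Qed.

Lemma error_le_dist4 : N <= 12 * dist ^ 2.
Proof.
  unfold error_sq.
  destruct dist4_components as [H1 [H2 [H3 H4]]].
  assert (HX : Rabs (s + b1 + b2 - sin) <= 3 * dist).
  { replace (s + b1 + b2 - sin) with ((s - sbar) + b1 + (b2 - (sin - sbar))) by ring.
    pose proof (Rabs_triang (s - sbar + b1) (b2 - (sin - sbar))).
    pose proof (Rabs_triang (s - sbar) b1). lra. }
  rewrite (sq_abs (s - sbar)), (sq_abs (Db - Ds)), (sq_abs (_ + _ + _ - _)), (sq_abs b1).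
  assert (forall w K, Rabs w <= K -> Rabs w ^ 2 <= K ^ 2)
    by (intros w K Hw; apply pow_incr; split; [apply Rabs_pos | exact Hw]).
  pose proof (H _ _ H1). pose proof (H _ _ H2). pose proof (H _ _ H4). pose proof (H _ _ HX).
  lra.
Qed.

End ErrorCoordinates.

(* An exponentially decaying quantity eventually drops below any eps > 0:
   for t >= C / (lam eps), e^(lam t) >= 1 + lam t > C / eps. *)
Lemma exp_bound_eventually_small (f : R -> R) (C lam : R) : 0 <= C -> 0 < lam ->
  (forall t, 0 <= t -> Rabs (f t) <= C * exp (- lam * t)) ->
  forall eps, 0 < eps -> exists T, forall t, T <= t -> Rabs (f t) < eps.
Proof.
  intros HC Hl Hf eps He. exists (C / (lam * eps)). intros t Ht.
  assert (HT0 : 0 <= C / (lam * eps))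
    by (apply Rmult_le_pos; [lra | apply Rlt_le, Rinv_0_lt_compat; nra]).
  pose proof (exp_ineq1_le (lam * t)) as Hexp.
  assert (Hinv : exp (- lam * t) * exp (lam * t) = 1)
    by (rewrite <- exp_plus; replace (- lam * t + lam * t) with 0 by ring; apply exp_0).
  assert (Hkx : C <= eps * (lam * t)).
  { apply Rmult_le_compat_l with (r := lam * eps) in Ht; [|nra].
    replace (lam * eps * (C / (lam * eps))) with C in Ht by (field; lra). nra. }
  pose proof (exp_pos (- lam * t)) as Hpos.
  eapply Rle_lt_trans; [apply Hf; lra|].
  apply Rle_lt_trans with (eps * (lam * t) * exp (- lam * t)); [apply Rmult_le_compat_r; lra|].
  replace eps with (eps * exp (lam * t) * exp (- lam * t)) at 2
    by (rewrite Rmult_assoc, (Rmult_comm (exp _)), Hinv; ring).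
  apply Rmult_lt_compat_r; [exact Hpos|]. apply Rmult_lt_compat_l; lra.
Qed.

(* Derivative rules stated for functions written as lambdas, so that the
   derivative of a polynomial expression in (s, b1, b2, Db) can be assembled by
   repeated application. *)
Lemma dlim_const (c t : R) : derivable_pt_lim (fun _ => c) t 0.
Proof. apply derivable_pt_lim_const. Qed.

Lemma dlim_plus (f g : R -> R) (t a b : R) : derivable_pt_lim f t a -> derivable_pt_lim g t b ->
  derivable_pt_lim (fun u => f u + g u) t (a + b).
Proof. intros; now apply (derivable_pt_lim_plus f g t a b). Qed.

Lemma dlim_minus (f g : R -> R) (t a b : R) : derivable_pt_lim f t a -> derivable_pt_lim g t b ->
  derivable_pt_lim (fun u => f u - g u) t (a - b).
Proof. intros; now apply (derivable_pt_lim_minus f g t a b). Qed.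

Lemma dlim_mult (f g : R -> R) (t a b : R) : derivable_pt_lim f t a -> derivable_pt_lim g t b ->
  derivable_pt_lim (fun u => f u * g u) t (a * g t + f t * b).
Proof. intros; now apply (derivable_pt_lim_mult f g t a b). Qed.

Lemma dlim_sq (f : R -> R) (t a : R) : derivable_pt_lim f t a ->
  derivable_pt_lim (fun u => f u ^ 2) t (2 * f t * a).
Proof.
  intros H. pose proof (dlim_mult f f t a a H H) as Hm.
  replace (2 * f t * a) with (a * f t + f t * a) by ring.
  intros eps He. destruct (Hm eps He) as [d Hd]. exists d.
  intros h Hh Hhd. specialize (Hd h Hh Hhd). cbv beta in *.
  replace (f (t + h) ^ 2 - f t ^ 2) with (f (t + h) * f (t + h) - f t * f t) by ring. exact Hd.
Qed.

Lemma dlim_value (f : R -> R) (t l l' : R) : derivable_pt_lim f t l -> l = l' ->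
  derivable_pt_lim f t l'.
Proof. now intros H <-. Qed.

Section ClosedLoop.

Variables (mu1 mu2 : R -> R) (sin sbar Dmin Dmax G1 G2 d : R).

Local Notation Ds := (mu2 sbar).
Local Notation Bs := (sin - sbar).
Local Notation dlo := (Ds - Dmin).
Local Notation dhi := (Dmax - Ds).
Local Notation alpha := (G2 * (dlo * dhi)).
Local Notation kappa := (G1 + d).
Local Notation gap := ((Ds - mu1 sbar) / 2).

Hypotheses (Hsbar : sbar < sin) (HDmin : 0 < Dmin) (HDlo : Dmin < Ds) (HDhi : Ds < Dmax)
  (Hmu12 : mu1 sbar < Ds) (HG1 : 0 <= G1) (HG2 : 0 < G2) (Hkappa : 0 < kappa).

Lemma alpha_pos : 0 < alpha.
Proof. apply Rmult_lt_0_compat; [lra | apply Rmult_lt_0_compat; lra]. Qed.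

Definition feedback (s Db : R) : R := sat Dmin Dmax (Db - G1 * (s - sbar)).

Definition lyap_state (g M s b1 b2 Db : R) : R :=
  lyap alpha Bs g M (s - sbar) (Db - Ds) (s + b1 + b2 - sin) b1.

Definition lyap_rate (g M s b1 b2 Db : R) : R :=
  let D := feedback s Db in
  let fs := - mu1 s * b1 - mu2 s * b2 + D * (sin - s) in
  let fb1 := mu1 s * b1 - D * b1 in
  let fb2 := mu2 s * b2 - D * b2 in
  let fDb := - G2 * (s - sbar) * (Db - Dmin) * (Dmax - Db) in
  2 * (alpha * (s - sbar) - g * (Db - Ds)) * fs + 2 * (Bs * (Db - Ds) - g * (s - sbar)) * fDb
  + 2 * M * ((s + b1 + b2 - sin) * (fs + fb1 + fb2) + b1 * fb1).

Lemma lyap_along_solution (g M : R) (s b1 b2 Db : R -> R) :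
  closed_loop_solution mu1 mu2 sin sbar Dmin Dmax G1 G2 s b1 b2 Db ->
  (forall t, 0 < t -> derivable_pt_lim (fun u => lyap_state g M (s u) (b1 u) (b2 u) (Db u)) t
                        (lyap_rate g M (s t) (b1 t) (b2 t) (Db t))) /\
  rcont0 (fun u => lyap_state g M (s u) (b1 u) (b2 u) (Db u)).
Proof.
  intros [Hode [Hs0 [Hb10 [Hb20 HDb0]]]]. unfold lyap_state, lyap. split.
  - intros t Ht. pose proof (Hode t Ht) as Hder. cbv zeta in Hder.
    destruct Hder as [Hs [Hb1 [Hb2 HDb]]].
    eapply dlim_value.
    + repeat first [ apply dlim_const | eassumption | apply dlim_minus | apply dlim_plus
                   | apply dlim_mult | apply dlim_sq ].
    + unfold lyap_rate, feedback. ring.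
  - repeat first [ apply rcont0_const | eassumption | apply rcont0_minus | apply rcont0_plus
                 | apply rcont0_mult | apply rcont0_sq ].
Qed.

(* With inactive saturation, lyap_rate splits into the (e,z) block, written as
   e' = Bs (z - kappa e) + Re + Q and z' = -alpha e + Rz with h the tangent error
   of mu2 at sbar and Q the input of the biomasses, and the (X,Y) washout block. *)
Lemma lyap_rate_decomposition (g M s b1 b2 Db : R) :
  feedback s Db = Db - G1 * (s - sbar) ->
  let e := s - sbar in let z := Db - Ds in let X := s + b1 + b2 - sin in
  let h := mu2 s - Ds - d * e in
  lyap_rate g M s b1 b2 Db =
    (2 * (alpha * e - g * z) * (Bs * (z - kappa * e) + (- e * (z - kappa * e - h) - Bs * h)
                                + (- mu1 s * b1 - mu2 s * (X - b1)))
     + 2 * (Bs * z - g * e) * (- alpha * e + (- G2 * e * (z + dlo) * (dhi - z) + G2 * (dlo * dhi) * e)))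
    + 2 * M * (X * (- feedback s Db * X) + b1 * ((mu1 s - feedback s Db) * b1)).
Proof. intros HD. cbv zeta. unfold lyap_rate. cbv zeta. rewrite HD. ring. Qed.

Section Tuning.

Variables (g c0 eta rho M lam : R).

(* Bound on the growth rates near sbar, and decay rate of the (X,Y) block. *)
Local Notation Mb := (Rabs (mu1 sbar) + gap + Rabs Ds + Rabs d + eta).
Local Notation cxy := (Rmin Dmin gap).

Hypotheses (Hg : 0 < g) (Hg_cross : g * (2 * alpha + Bs * kappa ^ 2) <= alpha * Bs * kappa)
  (Hg_alpha : g <= alpha / 2) (Hg_Bs : g <= Bs / 2)
  (Hc0 : 0 < c0) (Hc0_alpha : c0 <= alpha * Bs * kappa) (Hc0_g : c0 <= g * Bs)
  (Heta : 0 <= eta) (Hrho : 0 < rho) (Hrho1 : rho <= 1)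
  (Hrho_sat : rho * (1 + G1) <= Rmin dlo (Rmin dhi gap) / 2)
  (Hmu1_near : forall x, Rabs (x - sbar) <= rho -> Rabs (mu1 x - mu1 sbar) <= gap / 2)
  (Hmu2_near : forall x, Rabs (x - sbar) <= rho ->
                 Rabs (mu2 x - Ds - d * (x - sbar)) <= eta * Rabs (x - sbar))
  (Hsmall : 4 * (alpha + g) * (rho * (1 + kappa + eta) + Bs * eta)
            + 4 * (Bs + g) * (G2 * (Rabs (dhi - dlo) + rho) * rho) <= c0 / 4)
  (HM : 0 < M) (HM_input : 8 * (alpha + g) ^ 2 / c0 * (5 * Mb ^ 2) <= M * cxy)
  (Hlam : 0 < lam) (Hlam_ez : lam * (alpha + Bs + g) <= c0 / 2) (Hlam_xy : lam <= cxy).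

Lemma feedback_near (s Db : R) : Rabs (s - sbar) <= rho -> Rabs (Db - Ds) <= rho ->
  feedback s Db = Db - G1 * (s - sbar) /\ cxy <= feedback s Db /\ mu1 s + cxy <= feedback s Db.
Proof.
  intros He Hz.
  pose proof (Rmin_l dlo (Rmin dhi gap)). pose proof (Rmin_r dlo (Rmin dhi gap)).
  pose proof (Rmin_l dhi gap). pose proof (Rmin_r dhi gap).
  pose proof (Rmin_l Dmin gap). pose proof (Rmin_r Dmin gap).
  assert (Hdev : Rabs (Db - Ds - G1 * (s - sbar)) <= rho * (1 + G1)).
  { unfold Rminus at 1. eapply Rle_trans; [apply Rabs_triang|].
    rewrite Rabs_Ropp, Rabs_mult, (Rabs_pos_eq G1) by lra.
    assert (G1 * Rabs (s - sbar) <= G1 * rho) by (apply Rmult_le_compat_l; lra). lra. }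
  apply abs_le_between in Hdev.
  pose proof (Hmu1_near s He) as Hm1. apply abs_le_between in Hm1.
  assert (HD : feedback s Db = Db - G1 * (s - sbar)) by (apply sat_inactive; lra).
  rewrite HD. repeat split; lra.
Qed.

Lemma growth_near (x : R) : Rabs (x - sbar) <= rho -> Rabs (mu1 x) <= Mb /\ Rabs (mu2 x) <= Mb.
Proof.
  intros Hx.
  pose proof (Rabs_pos (mu1 sbar)). pose proof (Rabs_pos Ds). pose proof (Rabs_pos d).
  pose proof (Rabs_pos (x - sbar)).
  split.
  - pose proof (Hmu1_near x Hx).
    pose proof (Rabs_triang (mu1 x - mu1 sbar) (mu1 sbar)) as Htri.
    replace (mu1 x - mu1 sbar + mu1 sbar) with (mu1 x) in Htri by ring. lra.
  - pose proof (Hmu2_near x Hx).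
    replace (mu2 x) with (Ds + d * (x - sbar) + (mu2 x - Ds - d * (x - sbar))) by ring.
    pose proof (Rabs_triang (Ds + d * (x - sbar)) (mu2 x - Ds - d * (x - sbar))).
    pose proof (Rabs_triang Ds (d * (x - sbar))) as Htri. rewrite Rabs_mult in Htri.
    assert (Rabs d * Rabs (x - sbar) <= Rabs d)
      by (rewrite <- (Rmult_1_r (Rabs d)) at 2; apply Rmult_le_compat_l; lra).
    assert (eta * Rabs (x - sbar) <= eta)
      by (rewrite <- (Rmult_1_r eta) at 2; apply Rmult_le_compat_l; lra).
    lra.
Qed.

Lemma local_dissipation (s b1 b2 Db : R) : Rabs (s - sbar) <= rho -> Rabs (Db - Ds) <= rho ->
  lyap_rate g M s b1 b2 Db <= - lam * lyap_state g M s b1 b2 Db.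
Proof.
  intros He Hz.
  destruct (feedback_near s Db He Hz) as [HD [HD1 HD2]].
  destruct (growth_near s He) as [Hm1 Hm2].
  set (e := s - sbar) in *. set (z := Db - Ds) in *.
  set (X := s + b1 + b2 - sin). set (h := mu2 s - Ds - d * e).
  pose proof alpha_pos as Hal.
  pose proof (e_remainder_bound e z h kappa Bs rho eta Hkappa ltac:(lra) Heta He Hz (Hmu2_near s He)) as HRe.
  pose proof (z_remainder_bound G2 e z dlo dhi rho HG2 Hz) as HRz.
  assert (Hk1 : 0 <= rho * (1 + kappa + eta) + Bs * eta)
    by (apply Rplus_le_le_0_compat; apply Rmult_le_pos; lra).
  assert (Hk2 : 0 <= G2 * (Rabs (dhi - dlo) + rho) * rho)
    by (pose proof (Rabs_pos (dhi - dlo)); repeat apply Rmult_le_pos; lra).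
  pose proof (ez_perturbed_dissipation alpha Bs kappa g c0 _ _ e z _ _ (- mu1 s * b1 - mu2 s * (X - b1))
    Hal ltac:(lra) Hkappa Hg Hc0 Hk1 Hk2 Hg_cross Hc0_alpha Hc0_g HRe HRz Hsmall) as Hez.
  pose proof (input_bound (mu1 s) (mu2 s) X b1 _ Hm1 Hm2) as HQ.
  pose proof (xy_dissipation M _ (feedback s Db) (mu1 s) X b1 ltac:(lra) HD1 ltac:(lra)) as Hxy.
  destruct (lyap_bounds alpha Bs g M e z X b1 Hal ltac:(lra) Hg Hg_alpha Hg_Bs) as [_ Hup].
  rewrite (lyap_rate_decomposition g M s b1 b2 Db HD).
  unfold lyap_state. fold e z X. fold h.
  pose proof (pow2_ge_0 e). pose proof (pow2_ge_0 z).
  pose proof (pow2_ge_0 X). pose proof (pow2_ge_0 b1).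
  (* the input Q is paid for by the washout of (X, Y) *)
  assert (HQM : 8 * (alpha + g) ^ 2 / c0 * (- mu1 s * b1 - mu2 s * (X - b1)) ^ 2
                <= M * cxy * (X ^ 2 + b1 ^ 2)).
  { assert (0 <= 8 * (alpha + g) ^ 2 / c0)
      by (apply Rmult_le_pos; [pose proof (pow2_ge_0 (alpha + g)); lra | apply Rlt_le, Rinv_0_lt_compat, Hc0]).
    apply Rle_trans with (8 * (alpha + g) ^ 2 / c0 * (5 * Mb ^ 2) * (X ^ 2 + b1 ^ 2)).
    - rewrite Rmult_assoc. apply Rmult_le_compat_l; lra.
    - apply Rmult_le_compat_r; lra. }
  assert (Hlam_V : lam * lyap alpha Bs g M e z X b1
                   <= c0 / 2 * (e ^ 2 + z ^ 2) + M * cxy * (X ^ 2 + b1 ^ 2)).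
  { apply Rle_trans with (lam * ((alpha + Bs + g) * (e ^ 2 + z ^ 2) + M * (X ^ 2 + b1 ^ 2)));
      [apply Rmult_le_compat_l; lra|].
    rewrite Rmult_plus_distr_l, <- !Rmult_assoc. apply Rplus_le_compat.
    - apply Rmult_le_compat_r; lra.
    - replace (lam * M) with (M * lam) by ring. apply Rmult_le_compat_r; [lra|].
      apply Rmult_le_compat_l; lra. }
  lra.
Qed.

(* Sublevel threshold below which the state stays in the rho-neighbourhood, and
   the constants of equivalence between the Lyapunov function and error_sq. *)
Local Notation th := (Rmin alpha Bs / 2 * rho ^ 2).
Local Notation cL := (Rmin (Rmin alpha Bs / 2) M).
Local Notation cH := (alpha + Bs + g + M).

Lemma equivalence_constants_pos : 0 < cL /\ 0 < cH /\ 0 < th.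
Proof.
  pose proof alpha_pos as Hal.
  assert (Hmin : 0 < Rmin alpha Bs) by (apply Rmin_glb_lt; lra).
  split; [apply Rmin_glb_lt; lra|]. split; [lra|].
  apply Rmult_lt_0_compat; [lra | apply pow_lt; exact Hrho].
Qed.


Lemma lyap_equivalence (s b1 b2 Db : R) :
  cL * error_sq sbar sin Ds s b1 b2 Db <= lyap_state g M s b1 b2 Db <=
  cH * error_sq sbar sin Ds s b1 b2 Db.
Proof.
  pose proof alpha_pos as Hal.
  destruct (lyap_bounds alpha Bs g M (s - sbar) (Db - Ds) (s + b1 + b2 - sin) b1 Hal
              ltac:(lra) Hg Hg_alpha Hg_Bs) as [Hlo Hup].
  unfold lyap_state, error_sq.
  pose proof (Rmin_l (Rmin alpha Bs / 2) M). pose proof (Rmin_r (Rmin alpha Bs / 2) M).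
  pose proof (pow2_ge_0 (s - sbar)). pose proof (pow2_ge_0 (Db - Ds)).
  pose proof (pow2_ge_0 (s + b1 + b2 - sin)). pose proof (pow2_ge_0 b1).
  replace ((s - sbar) ^ 2 + (Db - Ds) ^ 2 + (s + b1 + b2 - sin) ^ 2 + b1 ^ 2)
    with (((s - sbar) ^ 2 + (Db - Ds) ^ 2) + ((s + b1 + b2 - sin) ^ 2 + b1 ^ 2)) by ring.
  set (E := (s - sbar) ^ 2 + (Db - Ds) ^ 2) in *.
  set (F := (s + b1 + b2 - sin) ^ 2 + b1 ^ 2) in *.
  assert (cL * E <= Rmin alpha Bs / 2 * E) by (apply Rmult_le_compat_r; unfold E; lra).
  assert (cL * F <= M * F) by (apply Rmult_le_compat_r; unfold F; lra).
  assert ((alpha + Bs + g) * E <= cH * E) by (apply Rmult_le_compat_r; unfold E; lra).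
  assert (M * F <= cH * F) by (apply Rmult_le_compat_r; unfold F; lra).
  split; lra.
Qed.

(* Along a solution starting in the sublevel set {V < th}, the Lyapunov function
   decays exponentially: the sublevel set lies in the rho-neighbourhood, where
   local_dissipation applies, and it is trapping. *)
Lemma lyap_decay (s b1 b2 Db : R -> R) :
  closed_loop_solution mu1 mu2 sin sbar Dmin Dmax G1 G2 s b1 b2 Db ->
  lyap_state g M (s 0) (b1 0) (b2 0) (Db 0) < th ->
  forall t, 0 <= t -> lyap_state g M (s t) (b1 t) (b2 t) (Db t)
                      <= lyap_state g M (s 0) (b1 0) (b2 0) (Db 0) * exp (- lam * t).
Proof.
  intros Hsol Hth.
  destruct (lyap_along_solution g M s b1 b2 Db Hsol) as [Hder Hrc].
  pose proof alpha_pos as Hal.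
  assert (Hmin : 0 < Rmin alpha Bs) by (apply Rmin_glb_lt; lra).
  assert (Hsub : forall u, lyap_state g M (s u) (b1 u) (b2 u) (Db u) < th ->
                   Rabs (s u - sbar) <= rho /\ Rabs (Db u - Ds) <= rho).
  { intros u Hu.
    destruct (lyap_bounds alpha Bs g M (s u - sbar) (Db u - Ds) (s u + b1 u + b2 u - sin) (b1 u)
                Hal ltac:(lra) Hg Hg_alpha Hg_Bs) as [Hlo _].
    unfold lyap_state in Hu.
    pose proof (pow2_ge_0 (s u - sbar)). pose proof (pow2_ge_0 (Db u - Ds)).
    pose proof (pow2_ge_0 (s u + b1 u + b2 u - sin)). pose proof (pow2_ge_0 (b1 u)).
    assert (0 <= M * ((s u + b1 u + b2 u - sin) ^ 2 + b1 u ^ 2))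
      by (apply Rmult_le_pos; lra).
    assert (Hez : (s u - sbar) ^ 2 + (Db u - Ds) ^ 2 < rho ^ 2).
    { apply Rmult_lt_reg_l with (r := Rmin alpha Bs / 2); lra. }
    split; apply abs_le_of_sq; lra. }
  apply (trapped_exponential_decay (fun u => lyap_state g M (s u) (b1 u) (b2 u) (Db u))
           (fun u => lyap_rate g M (s u) (b1 u) (b2 u) (Db u)) lam th);
    [lra | | exact Hth | exact Hder | exact Hrc |].
  - destruct (lyap_equivalence (s 0) (b1 0) (b2 0) (Db 0)) as [Hlo _].
    eapply Rle_trans; [|exact Hlo]. apply Rmult_le_pos.
    + apply Rlt_le, Rmin_glb_lt; lra.
    + unfold error_sq. pose proof (pow2_ge_0 (s 0 - sbar)). pose proof (pow2_ge_0 (Db 0 - Ds)).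
      pose proof (pow2_ge_0 (s 0 + b1 0 + b2 0 - sin)). pose proof (pow2_ge_0 (b1 0)). lra.
  - intros t _ Ht. destruct (Hsub t Ht) as [He Hz]. now apply local_dissipation.
Qed.

(* The ball of radius sqrt (th / (12 cH)) in dist4 lies in the sublevel set {V < th}:
   V <= cH error_sq <= 12 cH dist4^2. *)
Lemma initial_ball_in_sublevel (s b1 b2 Db : R) :
  dist4 s b1 b2 Db sbar 0 Bs Ds < sqrt (th / (12 * cH)) -> lyap_state g M s b1 b2 Db < th.
Proof.
  intros Hd.
  destruct equivalence_constants_pos as [HcL [HcH Hth]].
  destruct (lyap_equivalence s b1 b2 Db) as [_ Hup].
  pose proof (error_le_dist4 sbar sin Ds s b1 b2 Db) as HN.
  destruct (dist4_components sbar sin Ds s b1 b2 Db) as [He _].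
  set (dist := dist4 s b1 b2 Db sbar 0 Bs Ds) in *.
  assert (Hdist : 0 <= dist) by (pose proof (Rabs_pos (s - sbar)); lra).
  assert (Hsq : dist * dist < th / (12 * cH)).
  { rewrite <- (sqrt_sqrt (th / (12 * cH))) by (apply Rlt_le, Rdiv_lt_0_compat; lra).
    apply Rmult_le_0_lt_compat; lra. }
  apply Rmult_lt_compat_l with (r := 12 * cH) in Hsq; [|lra].
  replace (12 * cH * (th / (12 * cH))) with th in Hsq by (field; lra).
  assert (cH * error_sq sbar sin Ds s b1 b2 Db <= cH * (12 * dist ^ 2))
    by (apply Rmult_le_compat_l; lra).
  lra.
Qed.

(* The decay of V transfers to the max-distance, at half the rate:
   cL error_sq(t) <= V(t) <= V(0) e^(-lam t) <= 12 cH dist4(0)^2 e^(-lam t). *)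
Lemma dist4_decay (s b1 b2 Db : R -> R) :
  closed_loop_solution mu1 mu2 sin sbar Dmin Dmax G1 G2 s b1 b2 Db ->
  lyap_state g M (s 0) (b1 0) (b2 0) (Db 0) < th ->
  forall t, 0 <= t ->
    dist4 (s t) (b1 t) (b2 t) (Db t) sbar 0 Bs Ds
    <= sqrt (36 * cH / cL) * exp (- (lam / 2) * t) * dist4 (s 0) (b1 0) (b2 0) (Db 0) sbar 0 Bs Ds.
Proof.
  intros Hsol HV0 t Ht.
  destruct equivalence_constants_pos as [HcL [HcH Hth]].
  pose proof (error_le_dist4 sbar sin Ds (s 0) (b1 0) (b2 0) (Db 0)) as HN0.
  destruct (dist4_components sbar sin Ds (s 0) (b1 0) (b2 0) (Db 0)) as [He0 _].
  set (dist0 := dist4 (s 0) (b1 0) (b2 0) (Db 0) sbar 0 Bs Ds) in *.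
  assert (Hdist0 : 0 <= dist0) by (pose proof (Rabs_pos (s 0 - sbar)); lra).
  pose proof (exp_pos (- (lam / 2) * t)). pose proof (sqrt_pos (36 * cH / cL)).
  apply dist4_le_of_error; [apply Rmult_le_pos; [apply Rmult_le_pos|]; lra|].
  destruct (lyap_equivalence (s t) (b1 t) (b2 t) (Db t)) as [Hlo _].
  destruct (lyap_equivalence (s 0) (b1 0) (b2 0) (Db 0)) as [_ Hup].
  pose proof (lyap_decay s b1 b2 Db Hsol HV0 t Ht) as Hdec.
  assert (Hexp2 : exp (- (lam / 2) * t) ^ 2 = exp (- lam * t))
    by (simpl; rewrite Rmult_1_r, <- exp_plus; f_equal; field).
  rewrite !Rpow_mult_distr, Hexp2, pow2_sqrt by (apply Rlt_le, Rdiv_lt_0_compat; lra).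
  pose proof (exp_pos (- lam * t)).
  assert (lyap_state g M (s 0) (b1 0) (b2 0) (Db 0) * exp (- lam * t)
          <= cH * (12 * dist0 ^ 2) * exp (- lam * t))
    by (apply Rmult_le_compat_r; [lra|]; eapply Rle_trans; [exact Hup | apply Rmult_le_compat_l; lra]).
  apply Rmult_le_reg_l with (r := cL); [exact HcL|].
  replace (cL * (36 * cH / cL * exp (- lam * t) * dist0 ^ 2))
    with (3 * (cH * (12 * dist0 ^ 2) * exp (- lam * t))) by (field; lra).
  lra.
Qed.

Lemma tuned_local_exponential_stability :
  exists delta k r, 0 < delta /\ 0 < k /\ 0 < r /\
    forall s b1 b2 Db : R -> R,
      closed_loop_solution mu1 mu2 sin sbar Dmin Dmax G1 G2 s b1 b2 Db ->
      dist4 (s 0) (b1 0) (b2 0) (Db 0) sbar 0 Bs Ds < delta ->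
      (forall t, 0 <= t ->
         dist4 (s t) (b1 t) (b2 t) (Db t) sbar 0 Bs Ds
         <= k * exp (- r * t) * dist4 (s 0) (b1 0) (b2 0) (Db 0) sbar 0 Bs Ds)
      /\ (forall eps, 0 < eps -> exists T, forall t, T <= t -> Rabs (Db t - Ds) < eps).
Proof.
  destruct equivalence_constants_pos as [HcL [HcH Hth]].
  exists (sqrt (th / (12 * cH))), (sqrt (36 * cH / cL)), (lam / 2).
  split; [apply sqrt_lt_R0, Rdiv_lt_0_compat; lra|].
  split; [apply sqrt_lt_R0, Rdiv_lt_0_compat; lra|]. split; [lra|].
  intros s b1 b2 Db Hsol Hd0.
  pose proof (dist4_decay s b1 b2 Db Hsol (initial_ball_in_sublevel _ _ _ _ Hd0)) as Hdecay.
  split; [exact Hdecay|].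
  (* |Db t - Ds| <= dist4(t) decays exponentially *)
  destruct (dist4_components sbar sin Ds (s 0) (b1 0) (b2 0) (Db 0)) as [He0 _].
  pose proof (Rabs_pos (s 0 - sbar)). pose proof (sqrt_pos (36 * cH / cL)).
  apply (exp_bound_eventually_small (fun u => Db u - Ds)
           (sqrt (36 * cH / cL) * dist4 (s 0) (b1 0) (b2 0) (Db 0) sbar 0 Bs Ds) (lam / 2));
    [apply Rmult_le_pos; lra | lra |].
  intros t Ht. destruct (dist4_components sbar sin Ds (s t) (b1 t) (b2 t) (Db t)) as [_ [_ [_ Hz]]].
  pose proof (Hdecay t Ht). lra.
Qed.

End Tuning.

Hypotheses (Hmu1c : continuity_pt mu1 sbar) (Hmu2d : derivable_pt_lim mu2 sbar d).

(* Choice of the tangent accuracy eta and of the radius rho for given g, c0: rho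
   keeps the saturation inactive and makes the perturbation gains of the (e,z)
   block small (the tangent error costs c0/8, the nonlinear terms rho L <= c0/8). *)
Lemma neighbourhood_exists (g c0 : R) : 0 < g -> 0 < c0 ->
  exists eta rho, 0 < eta /\ 0 < rho /\ rho <= 1 /\
    rho * (1 + G1) <= Rmin dlo (Rmin dhi gap) / 2 /\
    (forall x, Rabs (x - sbar) <= rho -> Rabs (mu1 x - mu1 sbar) <= gap / 2) /\
    (forall x, Rabs (x - sbar) <= rho ->
       Rabs (mu2 x - Ds - d * (x - sbar)) <= eta * Rabs (x - sbar)) /\
    4 * (alpha + g) * (rho * (1 + kappa + eta) + Bs * eta)
      + 4 * (Bs + g) * (G2 * (Rabs (dhi - dlo) + rho) * rho) <= c0 / 4.
Proof.
  intros Hg Hc0.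
  pose proof alpha_pos as Hal.
  set (eta := c0 / (32 * (alpha + g) * Bs)).
  assert (Heta : 0 < eta) by (apply Rdiv_lt_0_compat; [lra | repeat apply Rmult_lt_0_compat; lra]).
  set (L := 4 * (alpha + g) * (1 + kappa + eta) + 4 * (Bs + g) * G2 * (Rabs (dhi - dlo) + 1)).
  assert (HL : 0 < L) by (pose proof (Rabs_pos (dhi - dlo));
    apply Rplus_lt_0_compat; repeat apply Rmult_lt_0_compat; lra).
  set (K := Rmin dlo (Rmin dhi gap)).
  assert (HK : 0 < K) by (repeat apply Rmin_glb_lt; lra).
  set (r0 := Rmin (Rmin 1 (c0 / (8 * L))) (K / (2 * (1 + G1)))).
  assert (Hr0 : 0 < r0) by (repeat apply Rmin_glb_lt; try lra; apply Rdiv_lt_0_compat; lra).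
  destruct (local_linearization mu1 mu2 sbar d eta (gap / 2) r0 Hmu1c Hmu2d Heta ltac:(lra) Hr0)
    as [rho [Hrho [Hrho_r0 Hnear]]]. unfold r0 in Hrho_r0.
  pose proof (Rmin_l (Rmin 1 (c0 / (8 * L))) (K / (2 * (1 + G1)))).
  pose proof (Rmin_r (Rmin 1 (c0 / (8 * L))) (K / (2 * (1 + G1)))).
  pose proof (Rmin_l 1 (c0 / (8 * L))). pose proof (Rmin_r 1 (c0 / (8 * L))).
  exists eta, rho. split; [exact Heta|]. split; [exact Hrho|]. split; [lra|]. split.
  { apply Rle_trans with (K / (2 * (1 + G1)) * (1 + G1)); [apply Rmult_le_compat_r; lra|].
    right; field; lra. }
  split; [intros x Hx; exact (proj1 (Hnear x Hx))|].
  split; [intros x Hx; exact (proj2 (Hnear x Hx))|].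
  assert (Htan : 4 * (alpha + g) * (Bs * eta) = c0 / 8) by (unfold eta; field; lra).
  assert (HrhoL : rho * L <= c0 / 8).
  { apply Rle_trans with (c0 / (8 * L) * L); [apply Rmult_le_compat_r; lra|].
    right; field; lra. }
  assert (4 * (Bs + g) * (G2 * (Rabs (dhi - dlo) + rho) * rho)
          <= 4 * (Bs + g) * (G2 * (Rabs (dhi - dlo) + 1) * rho)).
  { apply Rmult_le_compat_l; [lra|]. apply Rmult_le_compat_r; [lra|].
    apply Rmult_le_compat_l; lra. }
  unfold L in HrhoL. nra.
Qed.

(* Local exponential stability of the equilibrium (sbar, 0, sin - sbar, Ds):
   g, c0, eta, rho are chosen above, then M large enough to absorb the input of
   the (X,Y) block and lam the smaller of the two decay rates. *)
Theorem closed_loop_local_exponential_stability :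
  exists delta k r, 0 < delta /\ 0 < k /\ 0 < r /\
    forall s b1 b2 Db : R -> R,
      closed_loop_solution mu1 mu2 sin sbar Dmin Dmax G1 G2 s b1 b2 Db ->
      dist4 (s 0) (b1 0) (b2 0) (Db 0) sbar 0 Bs Ds < delta ->
      (forall t, 0 <= t ->
         dist4 (s t) (b1 t) (b2 t) (Db t) sbar 0 Bs Ds
         <= k * exp (- r * t) * dist4 (s 0) (b1 0) (b2 0) (Db 0) sbar 0 Bs Ds)
      /\ (forall eps, 0 < eps -> exists T, forall t, T <= t -> Rabs (Db t - Ds) < eps).
Proof.
  pose proof alpha_pos as Hal.
  destruct (cross_weight_exists alpha Bs kappa Hal ltac:(lra) Hkappa)
    as [g [c0 [Hg [Hcross [Hg_alpha [Hg_Bs [Hc0 [Hc0_alpha Hc0_g]]]]]]]].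
  destruct (neighbourhood_exists g c0 Hg Hc0)
    as [eta [rho [Heta [Hrho [Hrho1 [Hrho_sat [Hnear1 [Hnear2 Hsmall]]]]]]]].
  set (cxy := Rmin Dmin gap).
  assert (Hcxy : 0 < cxy) by (apply Rmin_glb_lt; lra).
  set (Cq := 8 * (alpha + g) ^ 2 / c0 * (5 * (Rabs (mu1 sbar) + gap + Rabs Ds + Rabs d + eta) ^ 2)).
  assert (HCq : 0 <= Cq / cxy).
  { apply Rmult_le_pos; [|apply Rlt_le, Rinv_0_lt_compat; lra].
    apply Rmult_le_pos; [apply Rmult_le_pos; [pose proof (pow2_ge_0 (alpha + g)); lra|] |].
    - apply Rlt_le, Rinv_0_lt_compat, Hc0.
    - pose proof (pow2_ge_0 (Rabs (mu1 sbar) + gap + Rabs Ds + Rabs d + eta)); lra. }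
  assert (HM_input : Cq <= (Cq / cxy + 1) * cxy)
    by (replace ((Cq / cxy + 1) * cxy) with (Cq + cxy) by (field; lra); lra).
  assert (Hlam_ez : Rmin (c0 / 2 / (alpha + Bs + g)) cxy * (alpha + Bs + g) <= c0 / 2).
  { apply Rle_trans with (c0 / 2 / (alpha + Bs + g) * (alpha + Bs + g)).
    - apply Rmult_le_compat_r; [lra | apply Rmin_l].
    - right; field; lra. }
  apply (tuned_local_exponential_stability g c0 eta rho (Cq / cxy + 1)
           (Rmin (c0 / 2 / (alpha + Bs + g)) cxy)); try assumption; try lra.
  - apply Rmin_glb_lt; [apply Rdiv_lt_0_compat|]; lra.
  - apply Rmin_r.
Qed.

End ClosedLoop.

Theorem proposition3
  (mu1 mu2 dmu1 dmu2 : R -> R) (sin sbar Dmin Dmax G1 G2 : R)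
  (Hsin : 0 < sin)
  (Hmu1_nonneg : forall x, 0 <= x <= sin -> 0 <= mu1 x)
  (Hmu2_nonneg : forall x, 0 <= x <= sin -> 0 <= mu2 x)
  (Hmu1_der : forall x, 0 < x < sin -> derivable_pt_lim mu1 x (dmu1 x))
  (Hmu2_der : forall x, 0 < x < sin -> derivable_pt_lim mu2 x (dmu2 x))
  (Hdmu1_cont : forall x, 0 < x < sin -> continuity_pt dmu1 x)
  (Hdmu2_cont : forall x, 0 < x < sin -> continuity_pt dmu2 x)
  (Hsbar : 0 < sbar < sin)
  (Hmu12 : mu1 sbar < mu2 sbar)
  (HDmin : 0 < Dmin) (HDmin2 : Dmin < mu2 sbar) (HDmax : mu2 sbar < Dmax)
  (HG1 : 0 < G1) (HG2 : 0 < G2) (HG1d : G1 > - dmu2 sbar) :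
  exists delta k lam, 0 < delta /\ 0 < k /\ 0 < lam /\
    forall s b1 b2 Db : R -> R,
      closed_loop_solution mu1 mu2 sin sbar Dmin Dmax G1 G2 s b1 b2 Db ->
      dist4 (s 0) (b1 0) (b2 0) (Db 0) sbar 0 (sin - sbar) (mu2 sbar) < delta ->
      (forall t, 0 <= t ->
         dist4 (s t) (b1 t) (b2 t) (Db t) sbar 0 (sin - sbar) (mu2 sbar)
         <= k * exp (- lam * t) *
            dist4 (s 0) (b1 0) (b2 0) (Db 0) sbar 0 (sin - sbar) (mu2 sbar))
      /\ (forall eps, 0 < eps -> exists T, forall t, T <= t ->
            Rabs (Db t - mu2 sbar) < eps).
Proof.
  (* Only the behaviour of mu1, mu2 at sbar matters: mu1 is continuous there and
     mu2 has derivative dmu2 sbar, with G1 + dmu2 sbar > 0. *)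
  apply (closed_loop_local_exponential_stability mu1 mu2 sin sbar Dmin Dmax G1 G2 (dmu2 sbar));
    try lra.
  - apply derivable_continuous_pt. exists (dmu1 sbar). apply Hmu1_der. exact Hsbar.
  - apply Hmu2_der. exact Hsbar.
Qed.
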